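(* Fix $n\in\mathbb N$ and suppose there is an algorithm for $n$ values in the discrete-time model that is $\alpha$-consistent and $\beta$-robust for the MaxProb objective. Then for every $K\in\mathbb N$ and every predicted prior $\tilde F$ supported on $[K]$ with $\tilde f(1)>0$, there exist real numbers $\{y_{t,\ell}\}_{t\in\{0,1,\dots,n\},\,\ell\in[K]}$ satisfying: (i) $y_{0,\ell}=1$ for all $\ell\in[K]$; (ii) $0\le y_{t,\ell}\le1$ for all $t\in[n],\ell\in[K]$; (iii) for all $t\in[n],\ell\in[K]$: $\Delta^t(\ell)\,y_{t,\ell}-\Delta^{t-1}(\ell)\tilde F(\ell-1)\,y_{t-1,\ell}\ge0$; (iv) for all $t\in[n],\ell\in[K]$: $\Delta^t(\ell)\,y_{t,\ell}-\Delta^{t-1}(\ell)\tilde F(\ell-1)\,y_{t-1,\ell}\le\sum_{m\in[\ell]}\Delta^{t-1}(m)\,\tilde f(\ell)\,y_{t-1,m}$; (v) $\displaystyle\sum_{t\in[n]}\sum_{\ell\in[K]}\tilde F(\ell)^{n-t}\Big(\sum_{m\in[\ell]}\Delta^{t-1}(m)\tilde f(\ell)y_{t-1,m}+\Delta^{t-1}(\ell)\tilde F(\ell-1)y_{t-1,\ell}-\Delta^t(\ell)y_{t,\ell}\Big)\ge\alpha$; (vi) for all $k\in[K]$: $\displaystyle\sum_{t\in[n]}\sum_{\ell\in[k]}\frac{\tilde F(\ell)^{n-t}}{\tilde F(k)^n}\Big(\sum_{m\in[\ell]}\Delta^{t-1}(m)\tilde f(\ell)y_{t-1,m}+\Delta^{t-1}(\ell)\tilde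 F(\ell-1)y_{t-1,\ell}-\Delta^t(\ell)y_{t,\ell}\Big)\ge\beta$.
   Context: Discrete-time model: $n$ values $x_1,\dots,x_n$ are drawn i.i.d. from an unknown prior $F$ (a distribution on $[0,\infty)$, possibly discrete) and revealed in the order $x_1,x_2,\dots,x_n$; upon seeing $x_t$ an online algorithm (knowing $n$, a predicted prior $\tilde F$, the values seen so far, and internal randomness) must irrevocably accept or reject it; at most one value is accepted. MaxProb with the all-ties-win convention: the algorithm succeeds if the accepted value equals $\max_i x_i$. The competitive ratio is the success probability; $\alpha$-consistent means $\alpha$-competitive for every $F$ when $\tilde F=F$; $\beta$-robust means $\beta$-competitive for every $F$ and every $\tilde F$. Here $[K]=\{1,\dots,K\}$, $\tilde F$ is a distribution on $[K]$ with cdf $\tilde F$ (with $\tilde F(0)=0$) and pmf $\tilde f$. For $t\in[n]$, $\Delta^t(\ell)=\tilde F(\ell)^t-\tilde F(\ell-1)^t$, and $\Delta^0(\ell)=1$ if $\ell=1$ and $0$ otherwise. *)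

From mathcomp Require Import all_boot all_order all_algebra.
From mathcomp Require Import reals.
Set Implicit Arguments. Unset Strict Implicit. Unset Printing Implicit Defensive.
Import Order.TTheory GRing.Theory Num.Theory.
Local Open Scope ring_scope.

(* A finitely supported distribution on [0, oo): a duplicate-free list of
   support points together with a mass function. *)
Record fdist (R : realType) := FDist { supp : seq R; mass : R -> R }.

Definition is_fdist (R : realType) (F : fdist R) : Prop :=
  [/\ uniq (supp F), all (fun x => 0 <= x) (supp F),
      (forall x, 0 <= mass F x),
      (forall x, x \notin supp F -> mass F x = 0)
    & \sum_(x <- supp F) mass F x = 1].

(* An online algorithm in behavioural form: given the predicted prior and the
   history x_1..x_t (the last entry being the current value), the probability
   of accepting x_t provided nothing has been accepted yet. n is fixed. *)
Definition algorithm (R : realType) := fdist R -> seq R -> R.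

Definition valid_alg (R : realType) (A : algorithm R) : Prop :=
  forall Ft h, 0 <= A Ft h <= 1.

Definition vals (R : realType) (n : nat) (F : fdist R)
  (xs : {ffun 'I_n -> 'I_(size (supp F))}) (i : 'I_n) : R :=
  nth 0 (supp F) (xs i).

Definition hist (R : realType) (n : nat) (F : fdist R)
  (xs : {ffun 'I_n -> 'I_(size (supp F))}) (t : nat) : seq R :=
  take t.+1 [seq vals xs i | i <- enum 'I_n].

(* MaxProb success probability (all ties win) of A with prediction Ft,
   when the n values are i.i.d. from F. *)
Definition success (R : realType) (n : nat) (A : algorithm R)
  (Ft F : fdist R) : R :=
  \sum_(xs : {ffun 'I_n -> 'I_(size (supp F))})
    (\prod_(i < n) mass F (vals xs i)) *
    \sum_(t < n)
      (\prod_(s < n | (s < t)%N) (1 - A Ft (hist xs s))) *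
      A Ft (hist xs t) *
      (if [forall j : 'I_n, vals xs j <= vals xs t] then 1 else 0).

Definition consistent (R : realType) (n : nat) (A : algorithm R) (alpha : R)
  : Prop := forall F, is_fdist F -> alpha <= success n A F F.

Definition robust (R : realType) (n : nat) (A : algorithm R) (beta : R)
  : Prop := forall F Ft, is_fdist F -> is_fdist Ft -> beta <= success n A Ft F.

Definition pmf (R : realType) (Ft : fdist R) (l : nat) : R := mass Ft l%:R.

Definition cdf (R : realType) (Ft : fdist R) (l : nat) : R :=
  \sum_(1 <= m < l.+1) pmf Ft m.

Definition Delta (R : realType) (Ft : fdist R) (t l : nat) : R :=
  if t == 0%N then (l == 1%N)%:R
  else cdf Ft l ^+ t - cdf Ft l.-1 ^+ t.

Definition gain (R : realType) (Ft : fdist R) (y : nat -> nat -> R)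
  (t l : nat) : R :=
  \sum_(1 <= m < l.+1) Delta Ft t.-1 m * pmf Ft l * y t.-1 m
  + Delta Ft t.-1 l * cdf Ft l.-1 * y t.-1 l - Delta Ft t l * y t l.

From mathcomp Require Import all_boot all_order all_algebra.
From mathcomp Require Import reals.
From mathcomp Require Import ring zify.
Import Order.TTheory GRing.Theory Num.Theory.
Local Open Scope ring_scope.
Set Implicit Arguments. Unset Strict Implicit. Unset Printing Implicit Defensive.

(* Replacing A by the algorithm [records_only A], which accepts only running
   maxima, cannot decrease the success probability under any prior.  For such an
   algorithm and a prior f on [K] with cdf F, let P_t(l) ([Pwait]) be the
   probability that the first t values are at most l and none was accepted, and
   S_t(l) ([Pstop]) the probability that moreover a value l arriving at step t+1
   is accepted.  Splitting at the acceptance time gives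
     success = sum_t sum_l F(l)^(n-t) f(l) S_(t-1)(l),
   and a one-step analysis gives the recursion
     P_(t+1)(l) - P_(t+1)(l-1) = F(l-1) (P_t(l) - P_t(l-1)) + f(l) (P_t(l) - S_t(l)).
   Hence y_(t,l) := (P_t(l) - P_t(l-1)) / Delta^t(l), the survival probability
   given that the maximum of the first t values is l, satisfies (i)-(iv); by the
   success formula, (v) is consistency on the predicted prior itself and (vi)
   robustness on the predicted prior conditioned on [k], under which P_t and
   S_t scale by F(k)^(-t). *)

Section WordSum.
Variable R : realType.

Fixpoint wsum (T : Type) (L : seq T) (n : nat) (G : seq T -> R) : R :=
  if n is n'.+1 then \sum_(x <- L) wsum L n' (fun w => G (x :: w)) else G [::].

Lemma eq_wsum T (L : seq T) n (G1 G2 : seq T -> R) :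
  (forall w, size w = n -> G1 w = G2 w) -> wsum L n G1 = wsum L n G2.
Proof.
elim: n G1 G2 => [|n IH] G1 G2 eqG /=; first exact: eqG.
by apply: eq_bigr => x _; apply: IH => w sw; apply: eqG; rewrite /= sw.
Qed.

Lemma ler_wsum T (L : seq T) n (G1 G2 : seq T -> R) :
  (forall w, size w = n -> G1 w <= G2 w) -> wsum L n G1 <= wsum L n G2.
Proof.
elim: n G1 G2 => [|n IH] G1 G2 leG /=; first exact: leG.
by apply: ler_sum => x _; apply: IH => w sw; apply: leG; rewrite /= sw.
Qed.

Lemma wsum0 T (L : seq T) n : wsum L n (fun _ => 0) = 0.
Proof. by elim: n => //= n IH; rewrite big1. Qed.

Lemma wsum_ge0 T (L : seq T) n (G : seq T -> R) :
  (forall w, size w = n -> 0 <= G w) -> 0 <= wsum L n G.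
Proof. by move=> G_ge0; rewrite -(wsum0 L n); apply: ler_wsum. Qed.

Lemma wsumZ T (L : seq T) n c (G : seq T -> R) :
  wsum L n (fun w => c * G w) = c * wsum L n G.
Proof.
elim: n G => [|n IH] G //=; rewrite mulr_sumr; apply: eq_bigr => x _; exact: IH.
Qed.

Lemma wsum_sum T I (r : seq I) (L : seq T) n (F : I -> seq T -> R) :
  wsum L n (fun w => \sum_(i <- r) F i w) = \sum_(i <- r) wsum L n (F i).
Proof.
elim: n F => [|n IH] F //=; rewrite exchange_big; apply: eq_bigr => x _; exact: IH.
Qed.

Lemma wsumD T (L : seq T) n (G1 G2 : seq T -> R) :
  wsum L n (fun w => G1 w + G2 w) = wsum L n G1 + wsum L n G2.
Proof.
elim: n G1 G2 => [|n IH] G1 G2 //=.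
by rewrite -big_split; apply: eq_bigr => x _; exact: IH.
Qed.

Lemma wsumB T (L : seq T) n (G1 G2 : seq T -> R) :
  wsum L n (fun w => G1 w - G2 w) = wsum L n G1 - wsum L n G2.
Proof.
rewrite wsumD -mulN1r -wsumZ; congr (_ + _).
by apply: eq_wsum => w _; rewrite mulN1r.
Qed.

Lemma wsum_cat T (L : seq T) a b (G : seq T -> R) :
  wsum L (a + b) G = wsum L a (fun u => wsum L b (fun v => G (u ++ v))).
Proof. by elim: a G => [|a IH] G //=; apply: eq_bigr => x _; exact: IH. Qed.

Lemma wsum_map T1 T2 (f : T1 -> T2) (L : seq T1) n (G : seq T2 -> R) :
  wsum (map f L) n G = wsum L n (fun w => G (map f w)).
Proof.
elim: n G => [|n IH] G //=; rewrite big_map; apply: eq_bigr => x _; exact: IH.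
Qed.

Lemma sum_ffun_wsum T m (f : 'I_m -> T) n (G : seq T -> R) :
  \sum_(xs : {ffun 'I_n -> 'I_m}) G [seq f (xs i) | i <- enum 'I_n]
  = wsum (map f (enum 'I_m)) n G.
Proof.
elim: n G => [|n IH] G /=.
  by rewrite enum_ord0 /= sumr_const card_ffun !card_ord expn0.
rewrite big_map big_enum /=.
rewrite (eq_bigr (fun j => \sum_(ys : {ffun 'I_n -> 'I_m})
   G (f j :: [seq f (ys i) | i <- enum 'I_n]))); last first.
  by move=> j _; rewrite -(IH (fun w => G (f j :: w))).
rewrite pair_big /=.
pose cons_ffun (p : 'I_m * {ffun 'I_n -> 'I_m}) : {ffun 'I_n.+1 -> 'I_m} :=
  [ffun i => if unlift ord0 i is Some j then p.2 j else p.1].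
pose uncons_ffun (xs : {ffun 'I_n.+1 -> 'I_m}) :=
  (xs ord0, [ffun j => xs (lift ord0 j)]).
have consK : cancel cons_ffun uncons_ffun.
  case=> i ys; rewrite /uncons_ffun /cons_ffun /= ffunE unlift_none; congr (_, _).
  by apply/ffunP => j; rewrite !ffunE liftK.
have unconsK : cancel uncons_ffun cons_ffun.
  move=> xs; apply/ffunP => i; rewrite /uncons_ffun /cons_ffun !ffunE /=.
  by case: unliftP => [j ->|->]; rewrite ?ffunE.
rewrite (reindex cons_ffun); last by apply: onW_bij; exists uncons_ffun.
apply: eq_bigr => -[i ys] _ /=.
rewrite enum_ordSl /= -map_comp /cons_ffun !ffunE unlift_none; congr (G (_ :: _)).
by apply: eq_map => j /=; rewrite ffunE liftK.
Qed.

Definition wprod (T : Type) (p : T -> R) (w : seq T) : R := \prod_(x <- w) p x.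

Lemma wprod_ge0 (T : Type) (p : T -> R) w : (forall x, 0 <= p x) -> 0 <= wprod p w.
Proof. by move=> p_ge0; apply: prodr_ge0. Qed.

Lemma sum_eq_supp (T : eqType) (S U : seq T) (p g : T -> R) :
  uniq S -> uniq U -> (forall x, p x != 0 -> (x \in S) && (x \in U)) ->
  \sum_(x <- S) p x * g x = \sum_(x <- U) p x * g x.
Proof.
move=> uS uU suppP.
have nz V : \sum_(x <- V) p x * g x = \sum_(x <- [seq x <- V | p x != 0]) p x * g x.
  rewrite big_filter [RHS]big_mkcond /=; apply: eq_bigr => x _.
  by case: eqP => [->|]; rewrite ?mul0r.
rewrite nz (nz U); apply: perm_big; apply: uniq_perm; rewrite ?filter_uniq //.
by move=> x; rewrite !mem_filter; case: (boolP (p x != 0)) => //= /suppP /andP[-> ->].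
Qed.

Lemma wsum_eq_supp (T : eqType) (S U : seq T) (p : T -> R) n (G : seq T -> R) :
  uniq S -> uniq U -> (forall x, p x != 0 -> (x \in S) && (x \in U)) ->
  wsum S n (fun w => wprod p w * G w) = wsum U n (fun w => wprod p w * G w).
Proof.
move=> uS uU suppP; elim: n G => [|n IH] G //=.
have cons V x : wsum V n (fun w => wprod p (x :: w) * G (x :: w))
   = p x * wsum V n (fun w => wprod p w * G (x :: w)).
  by rewrite -wsumZ; apply: eq_wsum => w _; rewrite /wprod big_cons mulrA.
under eq_bigr => x _ do rewrite cons IH.
under [RHS]eq_bigr => x _ do rewrite cons.
exact: sum_eq_supp.
Qed.

End WordSum.

Section Success.
Variable R : realType.

Definition success_word (n : nat) (A : algorithm R) (Ft F : fdist R) (h : seq R) : R :=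
  wprod (mass F) h *
  \sum_(t < n)
      (\prod_(s < n | (s < t)%N) (1 - A Ft (take s.+1 h))) *
      A Ft (take t.+1 h) *
      (if [forall j : 'I_n, nth 0 h j <= nth 0 h t] then 1 else 0).

Lemma success_wsum n A Ft F :
  success n A Ft F = wsum (supp F) n (success_word n A Ft F).
Proof.
have suppE : supp F =
    [seq nth 0 (supp F) j | j : 'I_(size (supp F)) <- enum 'I_(size (supp F))].
  by rewrite (map_comp (nth 0 (supp F)) val) val_enum_ord -/(mkseq _ _) mkseq_nth.
rewrite /success [in RHS]suppE -sum_ffun_wsum; apply: eq_bigr => xs _.
rewrite /success_word /wprod big_map big_enum /=; congr (_ * _).
apply: eq_bigr => t _; congr (_ * _).
have nth_vals (j : 'I_n) : nth 0 [seq vals xs i | i <- enum 'I_n] j = vals xs j.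
  by rewrite (nth_map j) ?size_enum_ord // nth_ord_enum.
by congr (if _ then _ else _); apply: eq_forallb => j; rewrite !nth_vals.
Qed.

Definition records_only (A : algorithm R) : algorithm R :=
  fun Ft h => if all (fun x => x <= last 0 h) h then A Ft h else 0.

Lemma records_only_valid A : valid_alg A -> valid_alg (records_only A).
Proof.
by move=> A01 Ft h; rewrite /records_only; case: ifP => // _; rewrite lexx ler01.
Qed.

(* Accepting a value that is not a running maximum never wins, while rejecting
   it can only help later steps. *)
Lemma success_records_only n A Ft F : valid_alg A -> is_fdist F ->
  success n A Ft F <= success n (records_only A) Ft F.
Proof.
move=> A01 [_ _ mass_ge0 _ _]; rewrite !success_wsum; apply: ler_wsum => h sh.
rewrite /success_word; apply: ler_wpM2l; first exact: wprod_ge0.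
apply: ler_sum => t _; case: ifP => [t_max|_]; last by rewrite !mulr0.
rewrite !mulr1.
have -> : records_only A Ft (take t.+1 h) = A Ft (take t.+1 h).
  rewrite /records_only; case: ifP => // /negP []; apply/allP => x /mem_take.
  have st : size (take t.+1 h) = t.+1 by rewrite size_takel // sh ltn_ord.
  rewrite -nth_last st /= nth_take // => /(nthP 0)[i ih <-].
  have ilt : (i < n)%N by rewrite -sh.
  by move/forallP: t_max => /(_ (Ordinal ilt)).
apply: ler_wpM2r; first by case/andP: (A01 Ft (take t.+1 h)).
apply: ler_prod => s _; case/andP: (A01 Ft (take s.+1 h)) => A0 A1.
rewrite subr_ge0 A1 /= /records_only; case: ifP => _ //.
by rewrite subr0 lerBlDr lerDl.
Qed.

End Success.

Notation wsumK K := (wsum (index_iota 1 K.+1)).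

Section RecordProbabilities.
Variable R : realType.
Variables (p : nat -> R) (a : seq nat -> R) (K : nat).

Definition cumul (l : nat) : R := \sum_(1 <= m < l.+1) p m.

Definition no_accept (u : seq nat) : R :=
  \prod_(0 <= s < size u) (1 - a (take s.+1 u)).

Definition Pwait (t l : nat) : R :=
  wsumK K t (fun u => wprod p u * no_accept u * (all (fun x => x <= l)%N u)%:R).

Definition Pstop (t l : nat) : R :=
  wsumK K t (fun u => wprod p u * no_accept u * (all (fun x => x <= l)%N u)%:R
                      * a (rcons u l)).

Lemma cumulE l : (l <= K)%N -> \sum_(1 <= x < K.+1) p x * (x <= l)%N%:R = cumul l.
Proof.
move=> lK; rewrite (big_cat_nat _ (n := l.+1)) //=.
rewrite [X in _ + X]big_nat_cond [X in _ + X]big1 ?addr0; last first.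
  by move=> i /andP[/andP[li _] _]; rewrite leqNgt li mulr0.
by apply: eq_big_nat => i /andP[_ il]; rewrite -ltnS il mulr1.
Qed.

Lemma wsum_all_le l k : (l <= K)%N ->
  wsumK K k (fun v => wprod p v * (all (fun x => x <= l)%N v)%:R) = cumul l ^+ k.
Proof.
move=> lK; elim: k => [|k IH] /=; first by rewrite /wprod big_nil mulr1.
rewrite exprS -{1}(cumulE lK) mulr_suml; apply: eq_bigr => x _.
rewrite -IH -wsumZ; apply: eq_wsum => v _.
by rewrite /wprod big_cons -mulnb natrM; ring.
Qed.

(* Splitting a word at the acceptance time [t]: the prefix contributes
   [Pstop], the [m] later values must stay below the accepted one. *)
Lemma wsum_accept_at t m :
  wsumK K (t + m.+1) (fun u => wprod p u *
     ((\prod_(0 <= s < t) (1 - a (take s.+1 u))) * a (take t.+1 u) *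
      (all (fun x => x <= nth 0 u t)%N u)%:R))
  = \sum_(1 <= l < K.+1) cumul l ^+ m * (p l * Pstop t l).
Proof.
rewrite wsum_cat /Pstop.
under [RHS]eq_bigr => l _ do rewrite mulrA -wsumZ.
rewrite -wsum_sum; apply: eq_wsum => u su /=.
apply: eq_big_seq => x; rewrite mem_index_iota ltnS => /andP[_ xK].
rewrite -(wsum_all_le m xK) -[RHS]mulrA [RHS]mulrC -wsumZ; apply: eq_wsum => v _.
have -> : \prod_(0 <= s < t) (1 - a (take s.+1 (u ++ x :: v))) = no_accept u.
  by rewrite /no_accept su; apply: eq_big_nat => s /andP[_ st]; rewrite takel_cat // su.
have -> : take t.+1 (u ++ x :: v) = rcons u x.
  by rewrite take_cat su ltnNge leqnSn /= subSn // subnn /= take0 cats1.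
have -> : nth 0 (u ++ x :: v) t = x by rewrite nth_cat su ltnn subnn.
by rewrite all_cat /= leqnn /= -!mulnb !natrM /wprod big_cat big_cons /=; ring.
Qed.

Lemma wsum_success_word n :
  wsumK K n (fun u => wprod p u * \sum_(t < n)
     (\prod_(s < n | (s < t)%N) (1 - a (take s.+1 u))) * a (take t.+1 u) *
      (all (fun x => x <= nth 0 u t)%N u)%:R)
  = \sum_(1 <= t < n.+1) \sum_(1 <= l < K.+1) cumul l ^+ (n - t) * (p l * Pstop t.-1 l).
Proof.
rewrite big_add1 /= big_mkord.
have wordE u : wprod p u * \sum_(t < n)
     (\prod_(s < n | (s < t)%N) (1 - a (take s.+1 u))) * a (take t.+1 u) *
      (all (fun x => x <= nth 0 u t)%N u)%:R
   = \sum_(t < n) wprod p u * ((\prod_(0 <= s < t) (1 - a (take s.+1 u))) *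
      a (take t.+1 u) * (all (fun x => x <= nth 0 u t)%N u)%:R).
  rewrite mulr_sumr; apply: eq_bigr => t _.
  by rewrite (big_nat_widen 0 t n) ?(ltnW (ltn_ord t)) // big_mkord mulrA.
rewrite (eq_wsum _ (fun u _ => wordE u)).
rewrite wsum_sum; apply: eq_bigr => t _.
have nt : (t + (n - t.+1).+1)%N = n by rewrite subnSK ?ltn_ord // subnKC // ltnW.
by rewrite -(wsum_accept_at t (n - t.+1)) nt.
Qed.


Hypothesis p_ge0 : forall l, 0 <= p l.
Hypothesis a01 : forall u, 0 <= a u <= 1.
Hypothesis a_records : forall u x, ~~ all (fun y => y <= x)%N u -> a (rcons u x) = 0.

Lemma no_accept01 u : 0 <= no_accept u <= 1.
Proof.
have reject01 s : 0 <= 1 - a (take s.+1 u) <= 1.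
  by case/andP: (a01 (take s.+1 u)) => a0 a1; rewrite subr_ge0 a1 lerBlDr lerDl.
by rewrite prodr_ge0 ?prodr_ile1 // => s _; case/andP: (reject01 s).
Qed.

Lemma no_accept_rcons u x : no_accept (rcons u x) = no_accept u * (1 - a (rcons u x)).
Proof.
rewrite /no_accept size_rcons big_nat_recr //=; congr (_ * (1 - a _)).
  by apply: eq_big_nat => s /andP[_ su]; rewrite -cats1 takel_cat // ltnW.
by rewrite take_oversize // size_rcons.
Qed.

Lemma Pwait0 l : Pwait 0 l = 1.
Proof. by rewrite /Pwait /= /wprod /no_accept big_nil big_geq // !mulr1. Qed.

Lemma PwaitS0 t : Pwait t.+1 0 = 0.
Proof.
rewrite /Pwait /=; apply: big1_seq => -[|x]; rewrite mem_index_iota // => _.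
by rewrite -(wsum0 R (index_iota 1 K.+1) t); apply: eq_wsum => w _; rewrite /= mulr0.
Qed.

Lemma Pstop_bounds t l : 0 <= Pstop t l <= Pwait t l.
Proof.
have weight_ge0 u : 0 <= wprod p u * no_accept u * (all (fun x => x <= l)%N u)%:R.
  case/andP: (no_accept01 u) => na0 _.
  by rewrite mulr_ge0 ?ler0n // mulr_ge0 // wprod_ge0.
apply/andP; split.
  by apply: wsum_ge0 => u _; rewrite mulr_ge0 //; case/andP: (a01 (rcons u l)).
by apply: ler_wsum => u _; rewrite ler_piMr //; case/andP: (a01 (rcons u l)).
Qed.

Lemma all_le_pred (u : seq nat) l :
  all (fun x => x <= l.-1)%N u -> all (fun x => x <= l)%N u.
Proof. by apply: sub_all => x /leq_trans; apply; apply: leq_pred. Qed.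

(* The increment of [Pwait t] at [l] is the weight of the words of maximum [l]
   that survive, which is at most the weight [Delta^t(l)] of all of them. *)
Lemma Pwait_inc_bounds t l : (1 <= l <= K)%N ->
  0 <= Pwait t l - Pwait t l.-1 <= cumul l ^+ t - cumul l.-1 ^+ t.
Proof.
move=> /andP[l1 lK]; have lK' : (l.-1 <= K)%N by rewrite (leq_trans (leq_pred l)).
rewrite -(wsum_all_le t lK) -(wsum_all_le t lK') /Pwait -!wsumB.
have max_eq_ge0 u : 0 <= (all (fun x => x <= l)%N u)%:R - (all (fun x => x <= l.-1)%N u)%:R :> R.
  case: (boolP (all (fun x => x <= l.-1)%N u)) => [/all_le_pred ->|]; first by rewrite subrr.
  by rewrite subr0 ler0n.
apply/andP; split.
  apply: wsum_ge0 => u _; rewrite -mulrBr mulr_ge0 //.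
  by case/andP: (no_accept01 u) => na0 _; rewrite mulr_ge0 // wprod_ge0.
apply: ler_wsum => u _; rewrite -!mulrBr -mulrA ler_wpM2l ?wprod_ge0 //.
by case/andP: (no_accept01 u) => na0 na1; rewrite ler_piMl.
Qed.

Lemma cumul_inc l : (1 <= l)%N -> cumul l - cumul l.-1 = p l.
Proof. by case: l => // l _; rewrite /cumul big_nat_recr //=; ring. Qed.

(* A word [u] followed by [x] survives with maximum exactly [l] iff either
   [x < l] and [u] has maximum [l] (then [x] is no record, hence rejected),
   or [x = l], [u <= l] and [x] is rejected. *)
Lemma survive_max_split u x l : (1 <= l)%N ->
  (1 - a (rcons u x)) * ((x <= l)%N%:R * (all (fun y => y <= l)%N u)%:R
     - (x <= l.-1)%N%:R * (all (fun y => y <= l.-1)%N u)%:R)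
  = (x <= l.-1)%N%:R * ((all (fun y => y <= l)%N u)%:R - (all (fun y => y <= l.-1)%N u)%:R)
    + ((x <= l)%N%:R - (x <= l.-1)%N%:R) *
      ((all (fun y => y <= l)%N u)%:R * (1 - a (rcons u l))) :> R.
Proof.
move=> l1; case: (leqP x l.-1) => [xl|lx].
  rewrite (leq_trans xl (leq_pred l)).
  case: (boolP (all (fun y => y <= l.-1)%N u)) => [/all_le_pred -> /=|ul]; first by ring.
  case: (boolP (all (fun y => y <= l)%N u)) => /= _; last by ring.
  rewrite a_records; first by ring.
  by apply: contra ul; apply: sub_all => y /leq_trans; apply.
case: (leqP x l) => [xl|_] /=; last by ring.
have -> : x = l by lia.
by ring.
Qed.

Lemma Pwait_rec t l : (1 <= l <= K)%N ->
  Pwait t.+1 l - Pwait t.+1 l.-1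
  = cumul l.-1 * (Pwait t l - Pwait t l.-1) + p l * (Pwait t l - Pstop t l).
Proof.
move=> /andP[l1 lK]; have lK' : (l.-1 <= K)%N by rewrite (leq_trans (leq_pred l)).
rewrite [p l * _]mulrBr addrA /Pwait /Pstop -[t.+1]addn1 !wsum_cat /= -wsumB.
rewrite -!wsumZ -wsumB -wsumZ -wsumD -wsumB.
apply: eq_wsum => u _; rewrite -sumrB.
set W := wprod p u * no_accept u.
set A1 := (all (fun y => y <= l)%N u)%:R.
set A0 := (all (fun y => y <= l.-1)%N u)%:R.
set al := a (rcons u l).
rewrite (eq_bigr (fun x => W * (A1 - A0) * (p x * (x <= l.-1)%N%:R)
     + W * (A1 * (1 - al)) * (p x * (x <= l)%N%:R)
     - W * (A1 * (1 - al)) * (p x * (x <= l.-1)%N%:R))); last first.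
  move=> x _; rewrite !cats1 /wprod big_rcons /= -/(wprod p u) no_accept_rcons.
  rewrite !all_rcons -!mulnb !natrM.
  have := survive_max_split u x l1; rewrite -/A1 -/A0 -/al /W => split_eq.
  transitivity (wprod p u * p x * no_accept u * ((1 - a (rcons u x)) *
    ((x <= l)%N%:R * A1 - (x <= l.-1)%N%:R * A0))); first by ring.
  by rewrite split_eq; ring.
rewrite sumrB big_split /= -!mulr_sumr !cumulE // -(cumul_inc l1) /W /A1 /A0 /al.
by ring.
Qed.

End RecordProbabilities.

Section NatPriors.
Variable R : realType.

Definition supported_on (F : fdist R) (K : nat) : Prop :=
  forall x, mass F x != 0 -> exists2 l : nat, (1 <= l <= K)%N & x = l%:R.

Lemma uniq_range K : uniq [seq m%:R : R | m <- index_iota 1 K.+1].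
Proof.
by rewrite map_inj_uniq ?iota_uniq // => x y /eqP; rewrite eqr_nat => /eqP.
Qed.

Lemma supported_on_mem F K x : is_fdist F -> supported_on F K -> mass F x != 0 ->
  (x \in supp F) && (x \in [seq m%:R : R | m <- index_iota 1 K.+1]).
Proof.
case=> _ _ _ mass_out _ suppF Fx; apply/andP; split.
  by apply: contraR Fx => /mass_out ->.
by have [l lK ->] := suppF x Fx; apply: map_f; rewrite mem_index_iota.
Qed.

Lemma forall_le_nth_nat n (u : seq nat) (t : 'I_n) : size u = n ->
  [forall j : 'I_n, nth 0 [seq m%:R | m <- u] j <= nth 0 [seq m%:R | m <- u] t :> R]
  = all (fun x => x <= nth 0 u t)%N u.
Proof.
move=> su; have tu : (t < size u)%N by rewrite su.
apply/forallP/(all_nthP 0) => [le_t i iu|le_t j].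
  have iv : (i < n)%N by rewrite -su.
  by have := le_t (Ordinal iv); rewrite /= !(nth_map 0%N) // ler_nat.
have ju : (j < size u)%N by rewrite su.
by rewrite !(nth_map 0%N) // ler_nat; apply: le_t.
Qed.

Lemma success_nat_prior n (B : algorithm R) (Ft F : fdist R) K
  (pF : nat -> R) (a : seq nat -> R) :
  is_fdist F -> supported_on F K -> (forall l, pF l = mass F l%:R) ->
  (forall u, a u = B Ft [seq m%:R | m <- u]) ->
  success n B Ft F = \sum_(1 <= t < n.+1) \sum_(1 <= l < K.+1)
     cumul pF l ^+ (n - t) * (pF l * Pstop pF a K t.-1 l).
Proof.
move=> F_fdist suppF pFE aE; have [uS _ _ _ _] := F_fdist.
rewrite success_wsum /success_word.
rewrite (wsum_eq_supp _ _ uS (uniq_range K) (fun x => supported_on_mem F_fdist suppF)).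
rewrite wsum_map -wsum_success_word; apply: eq_wsum => u su.
have -> : wprod (mass F) [seq m%:R | m <- u] = wprod pF u.
  by rewrite /wprod big_map; apply: eq_bigr => x _; rewrite pFE.
congr (_ * _); apply: eq_bigr => t _; rewrite forall_le_nth_nat //.
congr (_ * _ * _); last by case: (all _ _).
- by apply: eq_bigr => s _; rewrite aE map_take.
- by rewrite aE map_take.
Qed.

Lemma wprod_scale (p q : nat -> R) (c : R) k u :
  (forall m, (m <= k)%N -> q m = p m / c) -> all (fun x => x <= k)%N u ->
  wprod q u = wprod p u / c ^+ size u.
Proof.
move=> qE; elim: u => [|x u IH] /=; first by rewrite /wprod !big_nil divr1.
by move=> /andP[xk uk]; rewrite /wprod !big_cons -!/(wprod _ _) IH // qE // exprS invfM; ring.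
Qed.

Lemma Pstop_scale (p q : nat -> R) (c : R) a K k t l :
  (forall m, (m <= k)%N -> q m = p m / c) -> (l <= k)%N ->
  Pstop q a K t l = Pstop p a K t l / c ^+ t.
Proof.
move=> qE lk; rewrite /Pstop mulrC -wsumZ; apply: eq_wsum => u su.
case: (boolP (all (fun x => x <= l)%N u)) => ul; last by rewrite !(mulr0, mul0r).
have uk : all (fun x => x <= k)%N u by apply: sub_all ul => x /leq_trans; apply.
by rewrite (wprod_scale qE uk) su; ring.
Qed.

Lemma records_only_nat (A : algorithm R) Ft u x : ~~ all (fun y => y <= x)%N u ->
  records_only A Ft [seq m%:R | m <- rcons u x] = 0.
Proof.
move=> not_record; rewrite /records_only map_rcons last_rcons all_rcons lexx /=.
case: ifP => // /allP all_le; case/negP: not_record; apply/allP => y yu.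
by have := all_le _ (map_f _ yu); rewrite ler_nat.
Qed.

End NatPriors.

Section ConditionedPrior.
Variable R : realType.

Lemma cdf_gt0 (F : fdist R) k :
  (forall l, 0 <= pmf F l) -> 0 < pmf F 1 -> (1 <= k)%N -> 0 < cdf F k.
Proof.
move=> pmf_ge0 pmf1 k1; rewrite /cdf big_ltn //.
by rewrite ltr_wpDr // sumr_ge0.
Qed.

Definition cond_prior (F : fdist R) (k : nat) : fdist R :=
  FDist (supp F) (fun x => if x <= k%:R then mass F x / cdf F k else 0).

Lemma pmf_cond_prior F k l :
  pmf (cond_prior F k) l = if (l <= k)%N then pmf F l / cdf F k else 0.
Proof. by rewrite /pmf /= ler_nat. Qed.

Lemma cond_prior_fdist F K k : is_fdist F -> supported_on F K ->
  (k <= K)%N -> 0 < cdf F k -> is_fdist (cond_prior F k).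
Proof.
move=> F_fdist suppF kK cdf_gt0; have [uS suppS mass_ge0 mass_out _] := F_fdist.
split=> //= [x|x xS|]; first by case: ifP => // _; rewrite divr_ge0 // ltW.
  by rewrite mass_out // mul0r; case: ifP.
rewrite (eq_bigr (fun x => mass F x * ((x <= k%:R)%R%:R / cdf F k))); last first.
  by move=> x _; case: ifP => _; rewrite ?mul0r ?mulr0 ?mul1r.
rewrite (sum_eq_supp _ uS (uniq_range R K) (fun x => supported_on_mem F_fdist suppF)).
rewrite big_map; under eq_bigr => l _ do rewrite ler_nat mulrA.
by rewrite -mulr_suml (@cumulE _ (pmf F) K k kK) divff // gt_eqF.
Qed.

Lemma supported_on_cond F K k : supported_on F K -> supported_on (cond_prior F k) K.
Proof.
move=> suppF x /=; case: ifP => _ Fx; last by rewrite eqxx in Fx.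
by apply: suppF; apply: contraNneq Fx => ->; rewrite mul0r.
Qed.

Lemma success_cond_prior n (B : algorithm R) (Ft : fdist R) K k (a : seq nat -> R) :
  is_fdist Ft -> supported_on Ft K -> (k <= K)%N -> 0 < cdf Ft k ->
  (forall u, a u = B Ft [seq m%:R | m <- u]) ->
  success n B Ft (cond_prior Ft k) = \sum_(1 <= t < n.+1) \sum_(1 <= l < k.+1)
     cdf Ft l ^+ (n - t) / cdf Ft k ^+ n * (pmf Ft l * Pstop (pmf Ft) a K t.-1 l).
Proof.
move=> Ft_fdist suppF kK cdf_gt0 aE; set c := cdf Ft k.
have c0 : c != 0 by rewrite gt_eqF.
have condE m : (m <= k)%N -> pmf (cond_prior Ft k) m = pmf Ft m / c.
  by move=> mk; rewrite pmf_cond_prior mk.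
rewrite (success_nat_prior n (pF := pmf (cond_prior Ft k))
  (cond_prior_fdist Ft_fdist suppF kK cdf_gt0) (supported_on_cond suppF) (fun l => erefl) aE).
apply: eq_big_nat => t /andP[t1 tn].
rewrite (big_cat_nat _ (n := k.+1)) ?ltnS //= [X in _ + X]big_nat_cond.
rewrite [X in _ + X]big1 ?addr0; last first.
  by move=> l /andP[/andP[kl _] _]; rewrite ler_nat leqNgt kl mul0r mulr0.
apply: eq_big_nat => l /andP[_ lk]; rewrite ltnS in lk.
have cumulE' : cumul (pmf (cond_prior Ft k)) l = cdf Ft l / c.
  rewrite /cumul /cdf mulr_suml; apply: eq_big_nat => m /andP[_ ml].
  by rewrite condE // (leq_trans _ lk) // -ltnS.
rewrite cumulE' ler_nat lk (Pstop_scale _ _ _ condE lk).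
have cn : c ^+ n = c ^+ (n - t) * c * c ^+ t.-1.
  by rewrite -exprSr -exprD; congr (_ ^+ _); lia.
rewrite cn expr_div_n -/c -/(pmf Ft l); field.
by rewrite c0 !expf_neq0.
Qed.

End ConditionedPrior.

Section Witness.
Variable R : realType.
Variables (Ft : fdist R) (a : seq nat -> R) (K : nat).
Hypothesis pmf_ge0 : forall l, 0 <= pmf Ft l.
Hypothesis a01 : forall u, 0 <= a u <= 1.
Hypothesis a_records : forall u x, ~~ all (fun y => y <= x)%N u -> a (rcons u x) = 0.

Local Notation p := (pmf Ft).
Local Notation Pw := (Pwait p a K).
Local Notation Ps := (Pstop p a K).

(* At [t = 0] the increment is [Delta^0 l], not [Pw 0 l - Pw 0 l.-1], which
   vanishes since [Pw 0 = 1]. *)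
Definition wait_inc (t l : nat) : R :=
  if t == 0%N then (l == 1%N)%:R else Pw t l - Pw t l.-1.

(* Where [Delta t l = 0] the value of the witness is irrelevant. *)
Definition witness (t l : nat) : R :=
  if t == 0%N then 1 else if Delta Ft t l == 0 then 1 else wait_inc t l / Delta Ft t l.

Lemma Delta_witness t l : (1 <= l <= K)%N -> Delta Ft t l * witness t l = wait_inc t l.
Proof.
move=> lK; case: t => [|t]; first by rewrite /Delta /witness /= mulr1.
have /andP[inc_ge0 inc_le] := Pwait_inc_bounds pmf_ge0 a01 t.+1 lK.
rewrite /witness /wait_inc /=; case: eqP => [D0|/eqP D0]; last by rewrite mulrC divfK.
by rewrite D0 mul0r; apply/eqP; rewrite eq_le inc_ge0 -D0 inc_le.
Qed.

Lemma witness01 t l : (1 <= l <= K)%N -> 0 <= witness t.+1 l <= 1.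
Proof.
move=> lK; have /andP[inc_ge0 inc_le] := Pwait_inc_bounds pmf_ge0 a01 t.+1 lK.
rewrite /witness /wait_inc /=; case: eqP => [_|/eqP D0]; first by rewrite ler01 lexx.
have D_gt0 : 0 < Delta Ft t.+1 l by rewrite lt_def D0 (le_trans inc_ge0 inc_le).
by rewrite divr_ge0 ?ler_pdivrMr ?mul1r // ltW.
Qed.

Lemma sum_wait_inc t l : (1 <= l)%N -> \sum_(1 <= m < l.+1) wait_inc t m = Pw t l.
Proof.
move=> l1; case: t => [|t].
  rewrite big_ltn // /wait_inc /= big_nat_cond big1 ?addr0 ?Pwait0 //.
  by move=> [|[|m]] /andP[/andP[]].
have telescope k : \sum_(1 <= m < k.+1) (Pw t.+1 m - Pw t.+1 m.-1) = Pw t.+1 k - Pw t.+1 0.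
  elim: k => [|k IH]; first by rewrite big_geq // subrr.
  by rewrite big_nat_recr //= IH; ring.
by rewrite /wait_inc /= telescope PwaitS0 subr0.
Qed.

Lemma wait_inc_rec t l : (1 <= l <= K)%N ->
  wait_inc t.+1 l - cdf Ft l.-1 * wait_inc t l = p l * (Pw t l - Ps t l).
Proof.
move=> lK; have := Pwait_rec p a_records t lK; rewrite /wait_inc /= => ->.
change (cumul p l.-1) with (cdf Ft l.-1); case: t => [|t] /=; last by ring.
rewrite !Pwait0 subrr mulr0 add0r.
case: l lK => [//|[|l] _]; first by rewrite /cdf big_geq // mul0r subr0.
by rewrite mulr0 subr0.
Qed.

Lemma sum_Delta_witness t l : (1 <= l <= K)%N ->
  \sum_(1 <= m < l.+1) Delta Ft t m * p l * witness t m = p l * Pw t l.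
Proof.
move=> /andP[l1 lK]; rewrite -sum_wait_inc // mulr_sumr.
apply: eq_big_nat => m /andP[m1 ml].
have mK : (1 <= m <= K)%N by rewrite m1 (leq_trans _ lK) // -ltnS.
by rewrite -(Delta_witness t mK); ring.
Qed.

Lemma witness_flow t l : (1 <= t)%N -> (1 <= l <= K)%N ->
  Delta Ft t l * witness t l - Delta Ft t.-1 l * cdf Ft l.-1 * witness t.-1 l
  = p l * (Pw t.-1 l - Ps t.-1 l).
Proof.
case: t => // t _ lK /=; rewrite -(wait_inc_rec t lK) (Delta_witness t.+1 lK).
by rewrite -(Delta_witness t lK); ring.
Qed.

Lemma gain_witness t l : (1 <= t)%N -> (1 <= l <= K)%N ->
  gain Ft witness t l = p l * Ps t.-1 l.
Proof.
move=> t1 lK; rewrite /gain sum_Delta_witness // -addrA.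
rewrite (_ : _ - _ = - (p l * (Pw t.-1 l - Ps t.-1 l))); first by ring.
by rewrite -witness_flow //; ring.
Qed.

Lemma sum_gain_witness n k (c : nat -> nat -> R) : (k <= K)%N ->
  \sum_(1 <= t < n.+1) \sum_(1 <= l < k.+1) c t l * gain Ft witness t l
  = \sum_(1 <= t < n.+1) \sum_(1 <= l < k.+1) c t l * (p l * Ps t.-1 l).
Proof.
move=> kK; apply: eq_big_nat => t /andP[t1 _]; apply: eq_big_nat => l /andP[l1 lk].
by rewrite gain_witness // l1 (leq_trans _ kK) // -ltnS.
Qed.

Lemma witness_flow_bounds t l : (1 <= t)%N -> (1 <= l <= K)%N ->
  0 <= Delta Ft t l * witness t l - Delta Ft t.-1 l * cdf Ft l.-1 * witness t.-1 l
    <= \sum_(1 <= m < l.+1) Delta Ft t.-1 m * p l * witness t.-1 m.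
Proof.
move=> t1 lK; rewrite witness_flow // sum_Delta_witness //.
have /andP[Ps_ge0 Ps_le] := Pstop_bounds K pmf_ge0 a01 t.-1 l.
by rewrite mulr_ge0 ?subr_ge0 //= ler_wpM2l // lerBlDr lerDl.
Qed.

End Witness.

Theorem mainTheorem3 (R : realType) (n : nat) (A : algorithm R)
  (alpha beta : R) :
  valid_alg A -> consistent n A alpha -> robust n A beta ->
  forall (K : nat) (Ft : fdist R),
    is_fdist Ft ->
    (forall x, mass Ft x != 0 -> exists2 l : nat, (1 <= l <= K)%N & x = l%:R) ->
    0 < pmf Ft 1 ->
    exists y : nat -> nat -> R,
      (forall l, (1 <= l <= K)%N -> y 0%N l = 1) /\
          (forall t l, (1 <= t <= n)%N -> (1 <= l <= K)%N -> 0 <= y t l <= 1) /\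
          (forall t l, (1 <= t <= n)%N -> (1 <= l <= K)%N ->
             0 <= Delta Ft t l * y t l - Delta Ft t.-1 l * cdf Ft l.-1 * y t.-1 l) /\
          (forall t l, (1 <= t <= n)%N -> (1 <= l <= K)%N ->
             Delta Ft t l * y t l - Delta Ft t.-1 l * cdf Ft l.-1 * y t.-1 l
             <= \sum_(1 <= m < l.+1) Delta Ft t.-1 m * pmf Ft l * y t.-1 m) /\
          alpha <= \sum_(1 <= t < n.+1) \sum_(1 <= l < K.+1)
                     cdf Ft l ^+ (n - t) * gain Ft y t l /\
          (forall k, (1 <= k <= K)%N ->
             beta <= \sum_(1 <= t < n.+1) \sum_(1 <= l < k.+1)
                       cdf Ft l ^+ (n - t) / cdf Ft k ^+ n * gain Ft y t l).
Proof.
move=> A01 consA robA K Ft Ft_fdist suppF pmf1_gt0.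
have pmf_ge0 l : 0 <= pmf Ft l by case: Ft_fdist => _ _ mass_ge0 _ _; apply: mass_ge0.
pose a u := records_only A Ft [seq m%:R | m <- u].
have a01 u : 0 <= a u <= 1 by apply: records_only_valid.
have a_records u x : ~~ all (fun y => y <= x)%N u -> a (rcons u x) = 0.
  exact: records_only_nat.
exists (witness Ft a K); split=> //; split.
  by move=> [|t] l // _ lK; apply: witness01.
have flow_bounds := witness_flow_bounds (K := K) pmf_ge0 a01 a_records.
split; first by move=> t l /andP[t1 _] lK; case/andP: (flow_bounds _ _ t1 lK).
split; first by move=> t l /andP[t1 _] lK; case/andP: (flow_bounds _ _ t1 lK).
split.
  apply: (le_trans (consA Ft Ft_fdist)).
  apply: (le_trans (success_records_only n Ft A01 Ft_fdist)).
  rewrite (success_nat_prior n (pF := pmf Ft) Ft_fdist suppF (fun l => erefl) (fun u => erefl)).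
  by rewrite (sum_gain_witness pmf_ge0 a01 a_records n (fun t l => cdf Ft l ^+ (n - t))).
move=> k /andP[k1 kK]; have cdf_k_gt0 := cdf_gt0 pmf_ge0 pmf1_gt0 k1.
have cond_fdist := cond_prior_fdist Ft_fdist suppF kK cdf_k_gt0.
apply: (le_trans (robA _ _ cond_fdist Ft_fdist)).
apply: (le_trans (success_records_only n Ft A01 cond_fdist)).
rewrite (success_cond_prior n Ft_fdist suppF kK cdf_k_gt0 (fun u => erefl)).
by rewrite (sum_gain_witness pmf_ge0 a01 a_records n (fun t l => cdf Ft l ^+ (n - t) / cdf Ft k ^+ n)).
Qed.
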